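(* Let $P,PA$ be labelings and $c$ a command with $P;PA\vdash_{\mathtt{true}}c$, and let $\rho_1\sim_P\rho_2$ and $\mu_1\sim_{PA}\mu_2$. Then $\langle c,\rho_1,\mu_1,\mathtt{true}\rangle\approx_i\langle c,\rho_2,\mu_2,\mathtt{true}\rangle$, i.e., for every directive list $D$ and observation lists $O_1,O_2$, if $\langle c,\rho_k,\mu_k,\mathtt{true}\rangle\xrightarrow[D]{O_k}{}_i^*$ some configuration for $k=1,2$ (ideal semantics w.r.t. $P$), then $O_1=O_2$.
   Context: Language AWhile: scalar variables $X\in\mathcal V$, arrays $a\in\mathcal A$; $e::=n\mid X\mid\mathrm{op}_{\mathbb N}(e,\dots,e)\mid be\,?\,e_1:e_2$; $be::=\mathtt{true}\mid\mathtt{false}\mid\mathrm{cmp}(e,e)\mid\mathrm{op}_{\mathbb B}(be,\dots,be)$; $c::=\mathtt{skip}\mid X:=e\mid c_1;c_2\mid\mathtt{if}\ be\ \mathtt{then}\ c_1\ \mathtt{else}\ c_2\mid\mathtt{while}\ be\ \mathtt{do}\ c\mid X\leftarrow a[e]\mid a[e]\leftarrow e'$. Scalar state $\rho:\mathcal V\to\mathbb N$; array state $\mu$ with sizes $|a|_\mu$ and values $\mu(a)[i]$; $[\![\cdot]\!]_\rho$ pure evaluation. Labels: $\mathtt{true}$=public, $\mathtt{false}$=secret; $\ell_1\sqsubseteq\ell_2$ iff $\ell_2=\mathtt{true}\Rightarrow\ell_1=\mathtt{true}$; $\ell_1\sqcup\ell_2=\ell_1\wedge\ell_2$. $P:\mathcal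 V\to$ labels, $PA:\mathcal A\to$ labels; $P(e),P(be)$ public iff all variables occurring are public. $\rho_1\sim_P\rho_2$ iff they agree on all public scalar variables; $\mu_1\sim_{PA}\mu_2$ iff they agree on sizes and contents of all public arrays. IFC typing $P;PA\vdash_{pc}c$: $\mathtt{skip}$; $X:=e$ if $pc\sqcup P(e)\sqsubseteq P(X)$; $c_1;c_2$ if both typed under $pc$; $\mathtt{if}$ if both branches typed under $pc\sqcup P(be)$; $\mathtt{while}$ if body typed under $pc\sqcup P(be)$; $X\leftarrow a[i]$ if $pc\sqcup P(i)\sqcup PA(a)\sqsubseteq P(X)$; $a[i]\leftarrow e$ if $pc\sqcup P(i)\sqcup P(e)\sqsubseteq PA(a)$. Ideal semantics w.r.t. $P$: configurations $\langle c,\rho,\mu,\beta\rangle$; steps $\xrightarrow[d]{o}{}_i$ with optional observation $o\in\{\mathrm{branch}(v),\mathrm{read}(a,i),\mathrm{write}(a,i)\}$ and optional directive $d\in\{\mathit{step},\mathit{force},\mathrm{load}(a',j),\mathrm{store}(a',j)\}$. $X:=e\to\mathtt{skip}$ with $\rho[X\mapsto[\![e]\!]_\rho]$; $c_1;c_2\to c_1';c_2$ whenever $c_1\to c_1'$; $\mathtt{skip};c\to c$; $\mathtt{while}\ be\ \mathtt{do}\ c\to\mathtt{if}\ be\ \mathtt{then}\ (c;\mathtt{while}\ be\ \mathtt{do}\ c)\ \mathtt{else}\ \mathtt{skip}$ (no obs/directive, flag kept). Conditional: $v=(P(be)\vee\neg\beta)\wedge[\![be]\!]_\rho$; $\mathit{step}$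 goes to branch $v$; $\mathit{force}$ goes to branch $\neg v$ and sets $\beta:=\mathtt{true}$; obs $\mathrm{branch}(v)$. Read $X\leftarrow a[ie]$ with $\mathit{step}$: $i=0$ if $(P(ie)=\mathtt{false}\vee P(X)=\mathtt{true})\wedge\beta$, else $[\![ie]\!]_\rho$; requires $i<|a|_\mu$; $X:=\mu(a)[i]$; obs $\mathrm{read}(a,i)$. Read with $\mathrm{load}(a',j)$: requires $\beta=\mathtt{true}$, $P(ie)=\mathtt{true}$, $P(X)=\mathtt{false}$, $i=[\![ie]\!]_\rho\ge|a|_\mu$, $j<|a'|_\mu$; $X:=\mu(a')[j]$; obs $\mathrm{read}(a,i)$. Write $a[ie]\leftarrow ae$ with $\mathit{step}$: $i=0$ if $(P(ie)=\mathtt{false}\vee P(ae)=\mathtt{false})\wedge\beta$, else $[\![ie]\!]_\rho$; requires $i<|a|_\mu$; $\mu[a[i]\mapsto[\![ae]\!]_\rho]$; obs $\mathrm{write}(a,i)$. Write with $\mathrm{store}(a',j)$: requires $\beta=\mathtt{true}$, $P(ie)=P(ae)=\mathtt{true}$, $i\ge|a|_\mu$, $j<|a'|_\mu$; $\mu[a'[j]\mapsto[\![ae]\!]_\rho]$; obs $\mathrm{write}(a,i)$. Multi-step $\xrightarrow[D]{O}{}_i^*$ is the reflexive-transitive closure collecting directives $D$ and observations $O$. *)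

From Stdlib Require Import String List Bool Arith.
Import ListNotations.

Definition var := string.
Definition arr := string.

Inductive aexp : Type :=
  | ANum (n : nat)
  | AId (x : var)
  | AOp (f : list nat -> nat) (args : list aexp)
  | ACond (b : bexp) (e1 e2 : aexp)
with bexp : Type :=
  | BTrue
  | BFalse
  | BCmp (f : nat -> nat -> bool) (e1 e2 : aexp)
  | BOp (f : list bool -> bool) (args : list bexp).

Inductive com : Type :=
  | Skip
  | Asgn (x : var) (e : aexp)
  | Seq (c1 c2 : com)
  | If (b : bexp) (c1 c2 : com)
  | While (b : bexp) (c : com)
  | ARead (x : var) (a : arr) (i : aexp)
  | AWrite (a : arr) (i : aexp) (e : aexp).

Definition state := var -> nat.
Definition astate := arr -> list nat.    (* mu: |a| = length (mu a), mu(a)[i] = nth i (mu a) 0 *)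

Fixpoint aeval (rho : state) (e : aexp) : nat :=
  match e with
  | ANum n => n
  | AId x => rho x
  | AOp f args => f (map (aeval rho) args)
  | ACond b e1 e2 => if beval rho b then aeval rho e1 else aeval rho e2
  end
with beval (rho : state) (b : bexp) : bool :=
  match b with
  | BTrue => true
  | BFalse => false
  | BCmp f e1 e2 => f (aeval rho e1) (aeval rho e2)
  | BOp f args => f (map (beval rho) args)
  end.

(* Labels: true = public, false = secret. *)
Definition label := bool.
Definition lab_le (l1 l2 : label) : Prop := l2 = true -> l1 = true.
Definition lab_join (l1 l2 : label) : label := l1 && l2.

Definition pub_vars := var -> label.
Definition pub_arrs := arr -> label.

Fixpoint alabel (P : pub_vars) (e : aexp) : label :=
  match e with
  | ANum _ => true
  | AId x => P x
  | AOp _ args => forallb (alabel P) args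
  | ACond b e1 e2 => blabel P b && alabel P e1 && alabel P e2
  end
with blabel (P : pub_vars) (b : bexp) : label :=
  match b with
  | BTrue | BFalse => true
  | BCmp _ e1 e2 => alabel P e1 && alabel P e2
  | BOp _ args => forallb (blabel P) args
  end.

Definition pub_equiv (P : pub_vars) (r1 r2 : state) : Prop :=
  forall x, P x = true -> r1 x = r2 x.

Definition pub_equiv_arr (PA : pub_arrs) (m1 m2 : astate) : Prop :=
  forall a, PA a = true -> m1 a = m2 a.

Inductive well_typed (P : pub_vars) (PA : pub_arrs) : label -> com -> Prop :=
  | WT_Skip pc : well_typed P PA pc Skip
  | WT_Asgn pc x e :
      lab_le (lab_join pc (alabel P e)) (P x) ->
      well_typed P PA pc (Asgn x e)
  | WT_Seq pc c1 c2 :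
      well_typed P PA pc c1 -> well_typed P PA pc c2 ->
      well_typed P PA pc (Seq c1 c2)
  | WT_If pc b c1 c2 :
      well_typed P PA (lab_join pc (blabel P b)) c1 ->
      well_typed P PA (lab_join pc (blabel P b)) c2 ->
      well_typed P PA pc (If b c1 c2)
  | WT_While pc b c :
      well_typed P PA (lab_join pc (blabel P b)) c ->
      well_typed P PA pc (While b c)
  | WT_ARead pc x a i :
      lab_le (lab_join (lab_join pc (alabel P i)) (PA a)) (P x) ->
      well_typed P PA pc (ARead x a i)
  | WT_AWrite pc a i e :
      lab_le (lab_join (lab_join pc (alabel P i)) (alabel P e)) (PA a) ->
      well_typed P PA pc (AWrite a i e).

Inductive observation : Type :=
  | OBranch (v : bool)
  | ORead (a : arr) (i : nat)
  | OWrite (a : arr) (i : nat).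

Inductive direction : Type :=
  | DStep
  | DForce
  | DLoad (a : arr) (j : nat)
  | DStore (a : arr) (j : nat).

Definition upd_state (rho : state) (x : var) (v : nat) : state :=
  fun y => if String.eqb y x then v else rho y.

Fixpoint upd_list (l : list nat) (i : nat) (v : nat) : list nat :=
  match l, i with
  | [], _ => []
  | _ :: t, 0 => v :: t
  | h :: t, S i' => h :: upd_list t i' v
  end.

Definition upd_astate (mu : astate) (a : arr) (i v : nat) : astate :=
  fun b => if String.eqb b a then upd_list (mu a) i v else mu b.

Definition cfg : Type := (com * state * astate * bool)%type.

(* Ideal small-step semantics w.r.t. P; directives and observations are
   lists of length <= 1 (optional). *)
Inductive ideal_step (P : pub_vars) :
  cfg -> list direction -> list observation -> cfg -> Prop :=
  | IS_Asgn x e rho mu b :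
      ideal_step P (Asgn x e, rho, mu, b) [] []
                   (Skip, upd_state rho x (aeval rho e), mu, b)
  | IS_Seq c1 c1' c2 rho mu b rho' mu' b' ds os :
      ideal_step P (c1, rho, mu, b) ds os (c1', rho', mu', b') ->
      ideal_step P (Seq c1 c2, rho, mu, b) ds os (Seq c1' c2, rho', mu', b')
  | IS_Seq_Skip c rho mu b :
      ideal_step P (Seq Skip c, rho, mu, b) [] [] (c, rho, mu, b)
  | IS_While be c rho mu b :
      ideal_step P (While be c, rho, mu, b) [] []
                   (If be (Seq c (While be c)) Skip, rho, mu, b)
  | IS_If be c1 c2 rho mu b :
      let v := (blabel P be || negb b) && beval rho be in
      ideal_step P (If be c1 c2, rho, mu, b) [DStep] [OBranch v]
                   (if v then c1 else c2, rho, mu, b)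
  | IS_If_F be c1 c2 rho mu b :
      let v := (blabel P be || negb b) && beval rho be in
      ideal_step P (If be c1 c2, rho, mu, b) [DForce] [OBranch v]
                   (if v then c2 else c1, rho, mu, true)
  | IS_ARead x a ie rho mu b :
      let i := if (negb (alabel P ie) || P x) && b then 0 else aeval rho ie in
      i < length (mu a) ->
      ideal_step P (ARead x a ie, rho, mu, b) [DStep] [ORead a i]
                   (Skip, upd_state rho x (nth i (mu a) 0), mu, b)
  | IS_ARead_U x a ie a' j rho mu :
      let i := aeval rho ie in
      alabel P ie = true -> P x = false ->
      length (mu a) <= i -> j < length (mu a') ->
      ideal_step P (ARead x a ie, rho, mu, true) [DLoad a' j] [ORead a i]
                   (Skip, upd_state rho x (nth j (mu a') 0), mu, true)
  | IS_AWrite a ie e rho mu b :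
      let i := if (negb (alabel P ie) || negb (alabel P e)) && b
               then 0 else aeval rho ie in
      i < length (mu a) ->
      ideal_step P (AWrite a ie e, rho, mu, b) [DStep] [OWrite a i]
                   (Skip, rho, upd_astate mu a i (aeval rho e), b)
  | IS_AWrite_U a ie e a' j rho mu :
      let i := aeval rho ie in
      alabel P ie = true -> alabel P e = true ->
      length (mu a) <= i -> j < length (mu a') ->
      ideal_step P (AWrite a ie e, rho, mu, true) [DStore a' j] [OWrite a i]
                   (Skip, rho, upd_astate mu a' j (aeval rho e), true).

Inductive multi_ideal (P : pub_vars) :
  cfg -> list direction -> list observation -> cfg -> Prop :=
  | MI_refl k : multi_ideal P k [] [] k
  | MI_trans k1 k2 k3 ds1 os1 ds2 os2 :
      ideal_step P k1 ds1 os1 k2 ->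
      multi_ideal P k2 ds2 os2 k3 ->
      multi_ideal P k1 (ds1 ++ ds2) (os1 ++ os2) k3.

(* The two runs are driven by the same directives and stay in lockstep. With
   the speculation flag set, the ideal semantics never lets secrets reach
   control flow or addresses: a secret guard evaluates to false and a secret
   (or secret-transferring) index is replaced by 0. So from configurations
   with the same command, flag true and low-equivalent states, one step with
   equal directives yields equal observations and again such configurations;
   typing under pc = true survives because anything typed under a secret pc is
   also typed under a public one. *)

From Stdlib Require Import String List Bool Arith.
Import ListNotations.

Section PublicExpressions.
Variable P : pub_vars.
Variables rho1 rho2 : state.
Hypothesis Hequiv : pub_equiv P rho1 rho2.

Fixpoint aeval_pub_equiv (e : aexp) {struct e} :
  alabel P e = true -> aeval rho1 e = aeval rho2 e
with beval_pub_equiv (b : bexp) {struct b} :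
  blabel P b = true -> beval rho1 b = beval rho2 b.
Proof.
  - destruct e as [n | x | f args | b e1 e2]; simpl; intros Hpub.
    + reflexivity.
    + apply Hequiv, Hpub.
    + f_equal. revert args Hpub. fix IH 1. intros [|e args] Hpub; simpl in *.
      * reflexivity.
      * apply andb_prop in Hpub as [He Hargs].
        f_equal; [apply aeval_pub_equiv, He | apply IH, Hargs].
    + apply andb_prop in Hpub as [Hpub He2]. apply andb_prop in Hpub as [Hb He1].
      rewrite (beval_pub_equiv b Hb), (aeval_pub_equiv e1 He1), (aeval_pub_equiv e2 He2).
      reflexivity.
  - destruct b as [| | f e1 e2 | f args]; simpl; intros Hpub.
    + reflexivity.
    + reflexivity.
    + apply andb_prop in Hpub as [He1 He2].
      rewrite (aeval_pub_equiv e1 He1), (aeval_pub_equiv e2 He2). reflexivity.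
    + f_equal. revert args Hpub. fix IH 1. intros [|b args] Hpub; simpl in *.
      * reflexivity.
      * apply andb_prop in Hpub as [Hb Hargs].
        f_equal; [apply beval_pub_equiv, Hb | apply IH, Hargs].
Qed.

Lemma branch_outcome_pub_equiv (be : bexp) :
  (blabel P be || negb true) && beval rho1 be = (blabel P be || negb true) && beval rho2 be.
Proof.
  destruct (blabel P be) eqn:Hpub; simpl; [| reflexivity].
  apply beval_pub_equiv, Hpub.
Qed.

Lemma masked_index_pub_equiv (ie : aexp) (mask : bool) :
  (if (negb (alabel P ie) || mask) && true then 0 else aeval rho1 ie) =
  (if (negb (alabel P ie) || mask) && true then 0 else aeval rho2 ie).
Proof.
  destruct (alabel P ie) eqn:Hpub, mask; simpl; try reflexivity.
  apply aeval_pub_equiv, Hpub.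
Qed.

End PublicExpressions.

Lemma pub_equiv_upd_state (P : pub_vars) rho1 rho2 x v1 v2 :
  pub_equiv P rho1 rho2 -> (P x = true -> v1 = v2) ->
  pub_equiv P (upd_state rho1 x v1) (upd_state rho2 x v2).
Proof.
  unfold pub_equiv, upd_state; intros Hequiv Hv y Hy.
  destruct (String.eqb_spec y x); subst; auto.
Qed.

Lemma pub_equiv_arr_upd_astate (PA : pub_arrs) mu1 mu2 a i v1 v2 :
  pub_equiv_arr PA mu1 mu2 -> (PA a = true -> v1 = v2) ->
  pub_equiv_arr PA (upd_astate mu1 a i v1) (upd_astate mu2 a i v2).
Proof.
  unfold pub_equiv_arr, upd_astate; intros Hequiv Hv b Hb.
  destruct (String.eqb_spec b a); subst; auto.
  rewrite Hequiv, Hv; auto.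
Qed.

Lemma well_typed_lower_pc P PA pc pc' c :
  lab_le pc' pc -> well_typed P PA pc c -> well_typed P PA pc' c.
Proof.
  intros Hpc Htyped; revert pc' Hpc.
  induction Htyped; intros pc' Hpc; constructor;
    try (apply IHHtyped || apply IHHtyped1 || apply IHHtyped2);
    unfold lab_le, lab_join in *; destruct pc, pc'; simpl in *; intuition congruence.
Qed.

Lemma well_typed_If_branches P PA pc be c1 c2 :
  well_typed P PA pc (If be c1 c2) -> well_typed P PA pc c1 /\ well_typed P PA pc c2.
Proof.
  inversion 1; subst.
  split; eapply well_typed_lower_pc; eauto;
    unfold lab_le, lab_join; intros Hpc; apply andb_prop in Hpc as [Hpc _]; exact Hpc.
Qed.

Lemma well_typed_While_unfold P PA pc be c :
  well_typed P PA pc (While be c) ->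
  well_typed P PA pc (If be (Seq c (While be c)) Skip).
Proof.
  inversion 1; subst.
  constructor; [| constructor]. constructor; [assumption |].
  constructor. unfold lab_join in *. rewrite <- andb_assoc, andb_diag. assumption.
Qed.

(* Depends only on the command, so both runs split their common directive list
   at the same point. *)
Fixpoint step_arity (c : com) : nat :=
  match c with
  | Skip | Asgn _ _ | While _ _ | Seq Skip _ => 0
  | Seq c1 _ => step_arity c1
  | If _ _ _ | ARead _ _ _ | AWrite _ _ _ => 1
  end.

Lemma ideal_step_directives_length P c rho mu b ds os k' :
  ideal_step P (c, rho, mu, b) ds os k' -> length ds = step_arity c.
Proof.
  remember (c, rho, mu, b) as k eqn:Ek; intros Hstep; revert c rho mu b Ek.
  induction Hstep; intros c0 rho0 mu0 b0 Ek; injection Ek; intros; subst; try reflexivity.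
  simpl; erewrite IHHstep by reflexivity.
  destruct c1; try reflexivity; inversion Hstep.
Qed.

Lemma ideal_step_observations_length P k ds os k' :
  ideal_step P k ds os k' -> length os = length ds.
Proof. induction 1; simpl; auto. Qed.

Lemma multi_ideal_observations_length P k ds os k' :
  multi_ideal P k ds os k' -> length os = length ds.
Proof.
  induction 1 as [| k1 k2 k3 ds1 os1 ds2 os2 Hstep _ IH]; [reflexivity |].
  rewrite !length_app, IH, (ideal_step_observations_length _ _ _ _ _ Hstep).
  reflexivity.
Qed.

Lemma app_inv_length {A : Type} (l1 l2 r1 r2 : list A) :
  length l1 = length l2 -> l1 ++ r1 = l2 ++ r2 -> l1 = l2 /\ r1 = r2.
Proof.
  revert l2; induction l1 as [| x l1 IH]; intros [| y l2] Hlen Happ;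
    simpl in *; try discriminate; auto.
  injection Happ as -> Happ.
  destruct (IH l2) as [-> ->]; auto.
Qed.

Inductive low_equiv_cfg (P : pub_vars) (PA : pub_arrs) : cfg -> cfg -> Prop :=
  | LowEquiv c rho1 rho2 mu1 mu2 :
      well_typed P PA true c -> pub_equiv P rho1 rho2 -> pub_equiv_arr PA mu1 mu2 ->
      low_equiv_cfg P PA (c, rho1, mu1, true) (c, rho2, mu2, true).

Lemma low_equiv_cfg_upd_state P PA rho1 rho2 mu1 mu2 x v1 v2 :
  pub_equiv P rho1 rho2 -> pub_equiv_arr PA mu1 mu2 -> (P x = true -> v1 = v2) ->
  low_equiv_cfg P PA (Skip, upd_state rho1 x v1, mu1, true)
                     (Skip, upd_state rho2 x v2, mu2, true).
Proof. constructor; auto using WT_Skip, pub_equiv_upd_state. Qed.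

Lemma low_equiv_cfg_upd_astate P PA rho1 rho2 mu1 mu2 a i v1 v2 :
  pub_equiv P rho1 rho2 -> pub_equiv_arr PA mu1 mu2 -> (PA a = true -> v1 = v2) ->
  low_equiv_cfg P PA (Skip, rho1, upd_astate mu1 a i v1, true)
                     (Skip, rho2, upd_astate mu2 a i v2, true).
Proof. constructor; auto using WT_Skip, pub_equiv_arr_upd_astate. Qed.

Lemma ideal_step_lockstep P PA k1 k2 ds os1 os2 k1' k2' :
  ideal_step P k1 ds os1 k1' -> low_equiv_cfg P PA k1 k2 -> ideal_step P k2 ds os2 k2' ->
  os1 = os2 /\ low_equiv_cfg P PA k1' k2'.
Proof.
  intros Hstep1; revert k2 os2 k2'.
  induction Hstep1; intros k2 os2 k2' Hlow Hstep2;
    inversion Hlow as [c0 rho1 rho2 mu1 mu2 Hwt Hrho Hmu]; subst;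
    inversion Hstep2; subst; try discriminate;
    try match goal with H : ideal_step _ (Skip, _, _, _) _ _ _ |- _ => solve [inversion H] end.
  -
    inversion Hwt; subst; split; [reflexivity |].
    apply low_equiv_cfg_upd_state; auto.
    intros Hx; apply (aeval_pub_equiv P); auto.
  -
    inversion Hwt; subst.
    edestruct IHHstep1 as [Hos Hlow']; [constructor; eassumption | eassumption |].
    split; [exact Hos |].
    inversion Hlow'; subst; constructor; [constructor | ..]; assumption.
  -
    inversion Hwt; subst; split; [reflexivity | constructor; assumption].
  -
    split; [reflexivity | constructor; auto using well_typed_While_unfold].
  -
    assert (Hv : v = v0) by exact (branch_outcome_pub_equiv P rho rho2 Hrho be).
    clearbody v v0; subst v0.
    apply well_typed_If_branches in Hwt as [Hwt1 Hwt2].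
    split; [reflexivity | destruct v; constructor; assumption].
  -
    assert (Hv : v = v0) by exact (branch_outcome_pub_equiv P rho rho2 Hrho be).
    clearbody v v0; subst v0.
    apply well_typed_If_branches in Hwt as [Hwt1 Hwt2].
    split; [reflexivity | destruct v; constructor; assumption].
  -
    assert (Hi : i = i0) by exact (masked_index_pub_equiv P rho rho2 Hrho ie (P x)).
    clearbody i i0; subst i0.
    inversion Hwt as [| | | | | ? ? ? ? Hlab |]; subst; split; [reflexivity |].
    apply low_equiv_cfg_upd_state; auto.
    intros Hx; apply Hlab, andb_prop in Hx as [_ Ha]; rewrite Hmu; auto.
  -
    assert (Hi : i = i0) by exact (aeval_pub_equiv P rho rho2 Hrho ie H).
    clearbody i i0; subst i0; split; [reflexivity |].
    apply low_equiv_cfg_upd_state; auto; congruence.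
  -
    assert (Hi : i = i0)
      by exact (masked_index_pub_equiv P rho rho2 Hrho ie (negb (alabel P e))).
    clearbody i i0; subst i0.
    inversion Hwt as [| | | | | | ? ? ? ? Hlab]; subst; split; [reflexivity |].
    apply low_equiv_cfg_upd_astate; auto.
    intros Ha; apply Hlab, andb_prop in Ha as [_ He]; apply (aeval_pub_equiv P); auto.
  -
    assert (Hi : i = i0) by exact (aeval_pub_equiv P rho rho2 Hrho ie H).
    clearbody i i0; subst i0; split; [reflexivity |].
    apply low_equiv_cfg_upd_astate; auto.
    intros _; apply (aeval_pub_equiv P); auto.
Qed.

Lemma multi_ideal_lockstep P PA k1 k2 D O1 O2 k1' k2' :
  multi_ideal P k1 D O1 k1' -> low_equiv_cfg P PA k1 k2 -> multi_ideal P k2 D O2 k2' ->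
  O1 = O2.
Proof.
  intros Hmulti1; revert k2 O2 k2'.
  induction Hmulti1 as [k1 | k1 k1' k1'' ds1 os1 ds1' os1' Hstep1 Hmulti1 IH];
    intros k2 O2 k2' Hlow Hmulti2.
  - apply multi_ideal_observations_length in Hmulti2.
    destruct O2; [reflexivity | discriminate].
  - inversion Hmulti2 as [| ? k2'' ? ds2 os2 ds2' os2' Hstep2 Hmulti2' Ek Eds]; subst.
    + apply ideal_step_observations_length in Hstep1.
      apply multi_ideal_observations_length in Hmulti1.
      destruct ds1, ds1', os1, os1'; easy.
    + inversion Hlow; subst.
      apply app_inv_length in Eds as [-> ->];
        [| erewrite !ideal_step_directives_length by eassumption; reflexivity].
      destruct (ideal_step_lockstep _ _ _ _ _ _ _ _ _ Hstep1 Hlow Hstep2) as [-> Hlow'].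
      f_equal; eapply IH; eassumption.
Qed.

Theorem lemma5p3 :
  forall (P : pub_vars) (PA : pub_arrs) (c : com),
    well_typed P PA true c ->
    forall (rho1 rho2 : state) (mu1 mu2 : astate),
      pub_equiv P rho1 rho2 ->
      pub_equiv_arr PA mu1 mu2 ->
      forall (D : list direction) (O1 O2 : list observation) (k1 k2 : cfg),
        multi_ideal P (c, rho1, mu1, true) D O1 k1 ->
        multi_ideal P (c, rho2, mu2, true) D O2 k2 ->
        O1 = O2.
Proof.
  intros P PA c Hwt rho1 rho2 mu1 mu2 Hrho Hmu D O1 O2 k1 k2 Hmulti1 Hmulti2.
  exact (multi_ideal_lockstep P PA _ _ _ _ _ _ _ Hmulti1
           (LowEquiv P PA c rho1 rho2 mu1 mu2 Hwt Hrho Hmu) Hmulti2).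
Qed.
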